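(* Let $p\geq r\geq2$ and let $A$ be a symmetric nonnegative $r$-matrix of order $n$. If $\mathbf{x}=(x_1,\ldots,x_n)$ is a positive vector with $|\mathbf{x}|_p=1$ satisfying \[ \lambda x_k^{p-1}=\frac1r\frac{\partial P_A(\mathbf{x})}{\partial x_k},\qquad k=1,\ldots,n, \] for some real $\lambda$, then $\lambda=\lambda^{(p)}(A)$.
   Context: A cubical $r$-matrix of order $n$ is a function $A$ on $[n]^r$ with entries $a_{i_1,\ldots,i_r}$; symmetric means invariant under permutations of indices. $P_A(\mathbf{x})=\sum a_{i_1,\ldots,i_r}x_{i_1}\cdots x_{i_r}$ and $\lambda^{(p)}(A)=\max\{P_A(\mathbf{x}):\mathbf{x}\in\mathbb{R}^n,\ |\mathbf{x}|_p=1\}$. *)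

From HB Require Import structures.
From mathcomp Require Import all_boot all_order all_algebra all_fingroup.
From mathcomp Require Import all_classical all_reals all_analysis.
Set Implicit Arguments. Unset Strict Implicit. Unset Printing Implicit Defensive.
Import Order.TTheory GRing.Theory Num.Theory.
Local Open Scope ring_scope.

Definition rmatrix (R : realType) (r n : nat) := {ffun 'I_r -> 'I_n} -> R.

Definition rmx_symmetric (R : realType) (r n : nat) (A : rmatrix R r n) : Prop :=
  forall (s : 'S_r) (i : {ffun 'I_r -> 'I_n}), A [ffun j => i (s j)] = A i.

Definition rmx_nonneg (R : realType) (r n : nat) (A : rmatrix R r n) : Prop :=
  forall i, 0 <= A i.

Definition PA (R : realType) (r n : nat) (A : rmatrix R r n) (x : 'I_n -> R) : R :=
  \sum_(i : {ffun 'I_r -> 'I_n}) A i * \prod_(j < r) x (i j).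

Definition pnorm (R : realType) (n : nat) (p : R) (x : 'I_n -> R) : R :=
  powR (\sum_(i < n) powR `|x i| p) p^-1.

Definition partial (R : realType) (n : nat) (f : ('I_n -> R) -> R) (k : 'I_n)
  (x : 'I_n -> R) : R :=
  derive1 (fun t : R => f (fun i => x i + (if i == k then t else 0))) 0.

Definition is_lambda_p (R : realType) (r n : nat) (p : R) (A : rmatrix R r n)
  (lam : R) : Prop :=
  (exists y : 'I_n -> R, pnorm p y = 1 /\ PA A y = lam) /\
  (forall y : 'I_n -> R, pnorm p y = 1 -> PA A y <= lam).

From HB Require Import structures.
From mathcomp Require Import all_boot all_order all_algebra all_fingroup.
From mathcomp Require Import all_classical all_reals all_analysis.
From mathcomp Require Import ring.
Import Order.TTheory GRing.Theory Num.Theory.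
Set Implicit Arguments. Unset Strict Implicit. Unset Printing Implicit Defensive.
Local Open Scope ring_scope.

(* Euler's identity for the homogeneous form P_A turns the critical point
   equations into P_A(x) = lam.  For a competitor y with |y|_p = 1 put
   u = |y| and t = u / x; AM-GM on each monomial gives
   prod_j u_{i_j} <= (1/r) sum_j t_{i_j}^r prod_l x_{i_l}, and summing against
   the nonnegative entries of A rewrites the bound through the critical point
   equations as lam * sum_k u_k^r x_k^(p-r).  Young's inequality with exponents
   p/r and p/(p-r) bounds the last sum by r/p + (p-r)/p = 1. *)

Lemma deriv_prod (R : comNzRingType) n (F : 'I_n -> {poly R}) :
  (\prod_(j < n) F j)^`() = \sum_(j < n) (F j)^`() * \prod_(l < n | l != j) F l.
Proof.
elim: n F => [|n IHn] F; first by rewrite !big_ord0 -polyC1 derivC.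
rewrite big_ord_recr /= derivM IHn [RHS]big_ord_recr /=.
congr (_ + _).
- rewrite mulr_suml; apply: eq_bigr => j _; rewrite -mulrA; congr (_ * _).
  rewrite [RHS]big_mkcond big_ord_recr /= -val_eqE /= gtn_eqF //.
  by rewrite -big_mkcond.
- rewrite mulrC; congr (_ * _).
  rewrite [RHS]big_mkcond big_ord_recr /= eqxx mulr1.
  by apply: eq_bigr => i _; rewrite -val_eqE /= ltn_eqF.
Qed.

Lemma prodr_le_mean_exprn (R : realFieldType) r (t : 'I_r -> R) :
  (0 < r)%N -> (forall j, 0 <= t j) ->
  \prod_(j < r) t j <= (\sum_(j < r) t j ^+ r) / r%:R.
Proof.
move=> r_gt0 t_ge0.
have [AGM _] := leif_AGM (A := predT) (E := fun j => t j ^+ r)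
  (fun j _ => exprn_ge0 r (t_ge0 j)).
rewrite cardT /= size_enum_ord prodrXl in AGM.
rewrite -(ler_pXn2r r_gt0) ?nnegrE //; first exact: prodr_ge0.
by rewrite divr_ge0 // sumr_ge0 // => j _; rewrite exprn_ge0.
Qed.

Lemma young_powR (R : realType) (r : nat) (p a b : R) :
  (0 < r)%N -> r%:R <= p -> 0 <= a -> 0 <= b ->
  a ^+ r * b `^ (p - r%:R) <= r%:R / p * a `^ p + (p - r%:R) / p * b `^ p.
Proof.
move=> r_gt0 rp a_ge0 b_ge0.
have r0 : 0 < (r%:R : R) by rewrite ltr0n.
have p0 : 0 < p by apply: lt_le_trans rp.
have [<-|rp'] := eqVneq (r%:R : R) p.
  by rewrite subrr powRr0 mulr1 !mul0r addr0 divff ?gt_eqF // mul1r powR_mulrn.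
have pr0 : 0 < p - r%:R by rewrite subr_gt0 lt_neqAle rp' rp.
have := @conjugate_powR R (a ^+ r) (b `^ (p - r%:R)) (p / r%:R) (p / (p - r%:R))
  (exprn_ge0 _ a_ge0) (powR_ge0 _ _) (divr_gt0 p0 r0) (divr_gt0 p0 pr0).
rewrite !invf_div -powR_mulrn // -!powRrM.
have -> : r%:R / p + (p - r%:R) / p = 1 by field; rewrite gt_eqF.
have -> : r%:R * (p / r%:R) = p by field; rewrite gt_eqF.
have -> : (p - r%:R) * (p / (p - r%:R)) = p by field; rewrite gt_eqF.
by move=> /(_ erefl); rewrite ![_ `^ p * _]mulrC.
Qed.

Lemma pnorm_eq1 (R : realType) n (p : R) (z : 'I_n -> R) :
  0 < p -> pnorm p z = 1 -> \sum_k `|z k| `^ p = 1.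
Proof.
move=> p0 /(congr1 (@powR R ^~ p)); rewrite /pnorm -powRrM mulVf ?lt0r_neq0 //.
by rewrite powRr1 ?powR1 // sumr_ge0 // => k _; apply: powR_ge0.
Qed.

Section FormGradient.
Variables (R : realType) (r n : nat) (A : rmatrix R r n).

Definition PA_grad (x : 'I_n -> R) (k : 'I_n) : R :=
  \sum_i A i * \sum_(j < r) (i j == k)%:R * \prod_(l < r | l != j) x (i l).

Lemma partial_PA x k : partial (PA A) k x = PA_grad x k.
Proof.
rewrite /partial.
set q : {poly R} := \sum_i A i *:
  \prod_(j < r) ((x (i j))%:P + (if i j == k then 'X else 0)).
have -> : (fun t => PA A (fun l => x l + (if l == k then t else 0))) = horner q.
  apply/funext => t; rewrite /PA /q horner_sum; apply: eq_bigr => i _.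
  rewrite hornerZ horner_prod; congr (_ * _); apply: eq_bigr => j _.
  by case: ifP => _; rewrite !hornerE.
rewrite -derivE /q (big_morph _ (@derivD R) (@deriv0 R)) horner_sum; apply: eq_bigr => i _.
rewrite derivZ hornerZ deriv_prod horner_sum; congr (_ * _).
apply: eq_bigr => j _; rewrite hornerM horner_prod; congr (_ * _).
  by case: (i j == k); rewrite derivD derivC ?derivX ?deriv0 !hornerE.
by apply: eq_bigr => l _; case: ifP => _; rewrite !hornerE.
Qed.

Lemma sum_PA_grad (w x : 'I_n -> R) :
  \sum_k w k * x k * PA_grad x k =
  \sum_i A i * (\sum_(j < r) w (i j)) * \prod_(l < r) x (i l).
Proof.
under eq_bigr do rewrite mulr_sumr.
rewrite exchange_big /=; apply: eq_bigr => i _.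
rewrite -mulrA; under eq_bigr do rewrite mulrCA; rewrite -mulr_sumr; congr (_ * _).
under [LHS]eq_bigr do rewrite mulr_sumr.
rewrite exchange_big mulr_suml; apply: eq_bigr => j _.
rewrite (bigD1 (i j)) //= [X in _ + X]big1 => [|k /negbTE ik]; last first.
  by rewrite eq_sym ik mul0r mulr0.
by rewrite eqxx mul1r addr0 [in RHS](bigD1 j) //=; ring.
Qed.

Lemma PA_euler x : \sum_k x k * PA_grad x k = r%:R * PA A x.
Proof.
under eq_bigr do rewrite -[x _]mul1r.
rewrite sum_PA_grad /PA mulr_sumr; apply: eq_bigr => i _.
by rewrite sumr_const card_ord -mulr_natl; ring.
Qed.

Hypothesis A_ge0 : rmx_nonneg A.

Lemma PA_le_PA_norm y : PA A y <= PA A (fun k => `|y k|).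
Proof.
apply: ler_sum => i _; rewrite -normr_prod.
by apply: ler_wpM2l => //; apply: ler_norm.
Qed.

Lemma PA_le_grad_AGM (x u : 'I_n -> R) : (0 < r)%N ->
  (forall k, 0 < x k) -> (forall k, 0 <= u k) ->
  PA A u <= (\sum_k (u k / x k) ^+ r * x k * PA_grad x k) / r%:R.
Proof.
move=> r_gt0 x_gt0 u_ge0; rewrite sum_PA_grad /PA mulr_suml.
apply: ler_sum => i _; rewrite -!mulrA; apply: ler_wpM2l => //.
have -> : \prod_(j < r) u (i j) =
          \prod_(j < r) x (i j) * \prod_(j < r) (u (i j) / x (i j)).
  rewrite -big_split; apply: eq_bigr => j _.
  by rewrite /= mulrC divfK ?gt_eqF.
rewrite [leRHS]mulrCA.
apply: ler_wpM2l; first by apply: prodr_ge0 => j _; apply: ltW.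
by apply: prodr_le_mean_exprn => // j; rewrite divr_ge0 // ltW.
Qed.

End FormGradient.

Section CriticalPoint.
Variables (R : realType) (r n : nat) (A : rmatrix R r n) (p lam : R).
Variable x : 'I_n -> R.
Hypotheses (r_gt0 : (0 < r)%N) (rp : r%:R <= p) (x_gt0 : forall k, 0 < x k).
Hypothesis x_sphere : \sum_k x k `^ p = 1.
Hypothesis x_crit : forall k, PA_grad A x k = r%:R * lam * x k `^ (p - 1).

Let r_neq0 : (r%:R : R) != 0. Proof. by rewrite pnatr_eq0 -lt0n. Qed.

Let mul_powR_pred k : x k * x k `^ (p - 1) = x k `^ p.
Proof.
rewrite -{1}(powRr1 (ltW (x_gt0 k))) -powRD ?subrKC //.
by rewrite (gt_eqF (x_gt0 k)) implybT.
Qed.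

Lemma critical_PA : PA A x = lam.
Proof.
apply: (mulfI r_neq0); rewrite -PA_euler.
transitivity (r%:R * lam * \sum_k x k `^ p); last by rewrite x_sphere mulr1.
by rewrite mulr_sumr; apply: eq_bigr => k _; rewrite x_crit -mul_powR_pred; ring.
Qed.

Hypothesis A_ge0 : rmx_nonneg A.

Lemma critical_PA_max y : \sum_k `|y k| `^ p = 1 -> PA A y <= lam.
Proof.
move=> y_sphere; set u := fun k => `|y k|.
have lam_ge0 : 0 <= lam.
  rewrite -critical_PA; apply: sumr_ge0 => i _; rewrite mulr_ge0 //.
  by apply: prodr_ge0 => j _; apply: ltW.
apply: le_trans (PA_le_PA_norm A_ge0 y) _.
apply: le_trans (PA_le_grad_AGM A_ge0 r_gt0 x_gt0 (fun k => normr_ge0 (y k))) _.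
have -> : (\sum_k (u k / x k) ^+ r * x k * PA_grad A x k) / r%:R =
          lam * \sum_k u k ^+ r * x k `^ (p - r%:R).
  rewrite mulr_suml [RHS]mulr_sumr; apply: eq_bigr => k _.
  have xk_neq0 := gt_eqF (x_gt0 k).
  rewrite x_crit expr_div_n (@powRB _ (x k) p r%:R) ?xk_neq0 ?implybT //.
  rewrite powR_mulrn ?ltW // -mul_powR_pred.
  by field; rewrite r_neq0 expf_neq0 ?xk_neq0.
rewrite -[leRHS]mulr1; apply: ler_wpM2l => //.
apply: le_trans (ler_sum _ (fun k _ => young_powR r_gt0 rp (normr_ge0 (y k))
  (ltW (x_gt0 k)))) _.
rewrite big_split /= -!mulr_sumr y_sphere x_sphere !mulr1.
by rewrite -mulrDl subrKC divff // gt_eqF // (lt_le_trans _ rp) // ltr0n.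
Qed.

End CriticalPoint.

Theorem proposition13 (R : realType) (r n : nat) (p : R)
  (A : rmatrix R r n) (x : 'I_n -> R) (lam : R) :
  (2 <= r)%N -> r%:R <= p ->
  rmx_symmetric A -> rmx_nonneg A ->
  (forall k, 0 < x k) -> pnorm p x = 1 ->
  (forall k : 'I_n, lam * powR (x k) (p - 1) = r%:R^-1 * partial (PA A) k x) ->
  is_lambda_p p A lam.
Proof.
move=> r_ge2 rp _ A_ge0 x_gt0 x_norm x_eig.
have r_gt0 : (0 < r)%N by apply: leq_trans r_ge2.
have p_gt0 : 0 < p by apply: lt_le_trans rp; rewrite ltr0n.
have x_sphere : \sum_k x k `^ p = 1.
  by rewrite -(pnorm_eq1 p_gt0 x_norm); apply: eq_bigr => k _; rewrite gtr0_norm.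
have x_crit k : PA_grad A x k = r%:R * lam * x k `^ (p - 1).
  by rewrite -mulrA x_eig -partial_PA mulrA divff ?mul1r // pnatr_eq0 -lt0n.
split; first by exists x; rewrite (critical_PA r_gt0 x_gt0 x_sphere x_crit).
move=> y /(pnorm_eq1 p_gt0).
exact: critical_PA_max r_gt0 rp x_gt0 x_sphere x_crit A_ge0 y.
Qed.
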